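(* Let $Q$ be a quiver without oriented cycles and $v_0\in Q_0$ a vertex whose only incident arrows are arrows $a_1,\dots,a_l$ with $ta_i=v_i$, $ha_i=v_0$, and a single arrow $b$ with $tb=v_0$, $hb=w$. Let $\overline{Q}$ be the quiver with $\overline{Q}_0=Q_0\setminus\{v_0\}$ and $\overline{Q}_1=(Q_1\setminus\{b,a_1,\dots,a_l\})\cup\{ba_1,\dots,ba_l\}$, where $ba_i$ is an arrow from $v_i$ to $w$. If $Q$ satisfies property (S), then so does $\overline{Q}$.
   Context: Work over an algebraically closed field $k$ of characteristic zero. For a representation $W$ of dimension vector $\beta$, $S(W)=\{\sigma\in\mathbb{Z}^{Q_0}\mid\exists f\in\operatorname{SI}(Q,\beta)_\sigma,\ f(W)\neq0\}$, where $\operatorname{SI}(Q,\beta)_\sigma$ is the space of polynomial functions on $\operatorname{Rep}(Q,\beta)$ semi-invariant of weight $g\mapsto\prod_x\det(g(x))^{\sigma(x)}$ under $\operatorname{GL}(\beta)=\prod_x\operatorname{GL}(\beta(x))$ acting by $(g\cdot W)(a)=g(ha)W(a)g(ta)^{-1}$. A set $S$ is saturated if $n\sigma\in S$, $n\ge1$, implies $\sigma\in S$. A quiver has property (S) if $S(W)$ is saturated for all of its representations $W$. *)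

From HB Require Import structures.
From mathcomp Require Import all_boot all_order all_algebra.
Set Implicit Arguments. Unset Strict Implicit. Unset Printing Implicit Defensive.
Import Order.TTheory GRing.Theory Num.Theory.
Local Open Scope ring_scope.

Record quiver := Quiver {
  vert : finType;
  arr : finType;
  tl : arr -> vert;
  hd : arr -> vert }.

Definition acyclic (Q : quiver) : Prop :=
  forall (a : arr Q) (s : seq (arr Q)),
    path (fun x y => hd x == tl y) a s -> hd (last a s) != tl a.

Section Reps.
Variable k : fieldType.
Variable Q : quiver.

(* Representations of dimension vector beta: W(a) : k^{beta(ta)} -> k^{beta(ha)},
   acting on column vectors. *)
Definition Rep (beta : vert Q -> nat) : Type :=
  forall a : arr Q, 'M[k]_(beta (hd a), beta (tl a)).

Definition rep_act (beta : vert Q -> nat) (g : forall x : vert Q, 'M[k]_(beta x))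
  (W : Rep beta) : Rep beta :=
  fun a => g (hd a) *m W a *m invmx (g (tl a)).

Definition in_GL (beta : vert Q -> nat) (g : forall x : vert Q, 'M[k]_(beta x)) : Prop :=
  forall x, g x \in unitmx.

Inductive polyfun (beta : vert Q -> nat) : (Rep beta -> k) -> Prop :=
| pf_const (c : k) : polyfun (fun _ => c)
| pf_coord (a : arr Q) (i : 'I_(beta (hd a))) (j : 'I_(beta (tl a))) :
    polyfun (fun W => W a i j)
| pf_add f h : polyfun f -> polyfun h -> polyfun (fun W => f W + h W)
| pf_mul f h : polyfun f -> polyfun h -> polyfun (fun W => f W * h W).

Definition weight_char (beta : vert Q -> nat) (sigma : vert Q -> int)
  (g : forall x : vert Q, 'M[k]_(beta x)) : k :=
  \prod_(x : vert Q) (\det (g x)) ^ (sigma x).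

Definition semi_invariant (beta : vert Q -> nat) (sigma : vert Q -> int)
  (f : Rep beta -> k) : Prop :=
  polyfun f /\
  forall g, in_GL g -> forall W : Rep beta,
    f (rep_act g W) = weight_char sigma g * f W.

Definition Sset (beta : vert Q -> nat) (W : Rep beta) (sigma : vert Q -> int) : Prop :=
  exists f : Rep beta -> k, semi_invariant sigma f /\ f W != 0.

End Reps.

Definition saturated (T : Type) (S : (T -> int) -> Prop) : Prop :=
  forall (n : nat) (sigma : T -> int),
    (0 < n)%N -> S (fun x => n%:Z * sigma x) -> S sigma.

Definition propS (k : fieldType) (Q : quiver) : Prop :=
  forall (beta : vert Q -> nat) (W : Rep k beta), saturated (Sset W).

Lemma andb_left (a b : bool) : a && b -> a.
Proof. by case/andP. Qed.
Lemma andb_right (a b : bool) : a && b -> b.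
Proof. by case/andP. Qed.

Section Contract.
Variables (Q : quiver) (v0 w : vert Q) (hw : w != v0).

Definition cvert := {x : vert Q | x != v0}.
(* arrows of Q not incident to v0, plus one arrow "b a" for each arrow a into v0 *)
Definition carr := ({a : arr Q | (tl a != v0) && (hd a != v0)}
                    + {a : arr Q | (hd a == v0) && (tl a != v0)})%type.

Definition ctl (e : carr) : cvert :=
  match e with
  | inl a => exist _ (tl (val a)) (andb_left (valP a))
  | inr a => exist _ (tl (val a)) (andb_right (valP a))
  end.

Definition chd (e : carr) : cvert :=
  match e with
  | inl a => exist _ (hd (val a)) (andb_right (valP a))
  | inr a => exist _ w hw
  end.

Definition contract : quiver := @Quiver cvert carr ctl chd.
End Contract.

From HB Require Import structures.
From mathcomp Require Import all_boot all_order all_algebra.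
From Stdlib Require Import FunctionalExtensionality.
Set Implicit Arguments. Unset Strict Implicit. Unset Printing Implicit Defensive.
Import GRing.Theory.
Local Open Scope ring_scope.

(* Write Qbar for the contracted quiver and pr : Q_0 -> Qbar_0 for the map
   sending v0 to w and fixing the other vertices.  A dimension vector bb of
   Qbar lifts to beta = bb o pr, and a weight s of Qbar extends by 0 at v0.
   - Every representation Wbar of Qbar lifts to a representation L(Wbar) of
     Q with L(Wbar)(b) = identity, and conversely every representation W of
     Q contracts to Phi(W), where Phi(W)(b a) = W(b) W(a).  Both maps are
     polynomial, equivariant for the appropriate maps between the groups
     GL(beta) and GL(bb), these maps respect the characters, and
     Phi(L(Wbar)) = Wbar.
   - A general pullback lemma (semi-invariants compose with polynomial
     equivariant maps) then gives s in S(Wbar) <-> ext s in S(L(Wbar)).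
   - Saturation of S(L(Wbar)), which holds by property (S) of Q, therefore
     transfers to S(Wbar). *)

Section PolynomialMaps.
Variables (k : fieldType) (Q : quiver) (beta : vert Q -> nat).

Lemma polyfun_ext (f h : Rep k beta -> k) :
  polyfun f -> (forall W, f W = h W) -> polyfun h.
Proof. by move=> pf /functional_extensionality <-. Qed.

Lemma polyfun_sum n (F : 'I_n -> Rep k beta -> k) :
  (forall i, polyfun (F i)) -> polyfun (fun W => \sum_(i < n) F i W).
Proof.
elim: n F => [|n IH] F HF.
  by apply: polyfun_ext (pf_const beta 0) _ => W; rewrite big_ord0.
apply: polyfun_ext (pf_add (IH (fun i => F (widen_ord (leqnSn n) i)) _) (HF ord_max)) _.
  by move=> i; apply: HF.
by move=> W; rewrite big_ord_recr.
Qed.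

Definition polymx m n (A : Rep k beta -> 'M[k]_(m, n)) : Prop :=
  forall i j, polyfun (fun W => A W i j).

Lemma polymx_mul m n p (A : Rep k beta -> 'M[k]_(m, n)) (B : Rep k beta -> 'M[k]_(n, p)) :
  polymx A -> polymx B -> polymx (fun W => A W *m B W).
Proof.
move=> hA hB i j.
apply: polyfun_ext (polyfun_sum (fun l => pf_mul (hA i l) (hB l j))) _.
by move=> W; rewrite mxE.
Qed.

Lemma polymx_cast m n m' n' (e : (m = m') * (n = n')) (A : Rep k beta -> 'M[k]_(m, n)) :
  polymx A -> polymx (fun W => castmx e (A W)).
Proof.
move=> hA i j; apply: polyfun_ext (hA (cast_ord (esym e.1) i) (cast_ord (esym e.2) j)) _.
by move=> W; rewrite castmxE.
Qed.

Lemma polymx_arrow (a : arr Q) : polymx (fun W : Rep k beta => W a).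
Proof. by move=> i j; apply: pf_coord. Qed.

Lemma polymx_const m n (M : 'M[k]_(m, n)) : polymx (fun _ => M).
Proof. by move=> i j; apply: pf_const. Qed.

End PolynomialMaps.

Lemma polyfun_comp (k : fieldType) (Q1 Q2 : quiver) (b1 : vert Q1 -> nat)
  (b2 : vert Q2 -> nat) (Psi : Rep k b1 -> Rep k b2) :
  (forall a, polymx (fun W => Psi W a)) ->
  forall f, polyfun f -> polyfun (fun W => f (Psi W)).
Proof.
move=> hPsi f; elim=> [c|a i j|f1 h1 _ IH1 _ IH2|f1 h1 _ IH1 _ IH2].
- exact: pf_const.
- exact: hPsi.
- exact: pf_add.
- exact: pf_mul.
Qed.

Lemma Sset_pullback (k : fieldType) (Q1 Q2 : quiver) (b1 : vert Q1 -> nat)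
  (b2 : vert Q2 -> nat) (Psi : Rep k b1 -> Rep k b2)
  (gamma : (forall x, 'M[k]_(b1 x)) -> forall y, 'M[k]_(b2 y))
  (s1 : vert Q1 -> int) (s2 : vert Q2 -> int) :
  (forall a, polymx (fun W => Psi W a)) ->
  (forall g, in_GL g -> in_GL (gamma g)) ->
  (forall g W, in_GL g -> Psi (rep_act g W) = rep_act (gamma g) (Psi W)) ->
  (forall g, weight_char s2 (gamma g) = weight_char s1 g) ->
  forall W, Sset (Psi W) s2 -> Sset W s1.
Proof.
move=> hpoly hGL hequiv hchar W [F [[pfF semiF] nzF]].
exists (fun W => F (Psi W)); split=> //; split; first exact: polyfun_comp.
by move=> g hg W'; rewrite hequiv // semiF ?hchar //; apply: hGL.
Qed.

(* Transport of matrices along equalities of indices of a dimension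
   function d; needed because the dimensions bb (pr x) of the lifted
   representation only agree propositionally with those of Qbar. *)
Section Transport.
Variables (k : fieldType) (V : eqType) (d : V -> nat).

Definition tr (y1 y1' y2 y2' : V) (e1 : y1 = y1') (e2 : y2 = y2')
  (A : 'M[k]_(d y1, d y2)) : 'M[k]_(d y1', d y2') :=
  castmx (congr1 d e1, congr1 d e2) A.

Lemma tr_id (y1 y2 : V) (e1 : y1 = y1) (e2 : y2 = y2) A : tr e1 e2 A = A.
Proof. exact: castmx_id. Qed.

Lemma tr_tr (y1 y1' y1'' y2 y2' y2'' : V) (e1 : y1 = y1') (e2 : y2 = y2')
  (f1 : y1' = y1'') (f2 : y2' = y2'') A :
  tr f1 f2 (tr e1 e2 A) = tr (etrans e1 f1) (etrans e2 f2) A.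
Proof. by case: y1'' / f1; case: y2'' / f2; case: y1' / e1; case: y2' / e2; rewrite !tr_id. Qed.

Lemma tr_mul (y1 y1' y2 y2' y3 y3' : V) (e1 : y1 = y1') (e2 : y2 = y2')
  (e3 : y3 = y3') A B :
  tr e1 e3 (A *m B) = tr e1 e2 A *m tr e2 e3 B.
Proof. by case: y1' / e1; case: y2' / e2; case: y3' / e3; rewrite !tr_id. Qed.

Lemma tr_inv (y y' : V) (e : y = y') A : tr e e (invmx A) = invmx (tr e e A).
Proof. by case: y' / e; rewrite !tr_id. Qed.

Lemma tr_det (y y' : V) (e : y = y') A : \det (tr e e A) = \det A.
Proof. by case: y' / e; rewrite !tr_id. Qed.

Lemma tr_unit (y y' : V) (e : y = y') A : (tr e e A \in unitmx) = (A \in unitmx).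
Proof. by rewrite !unitmxE tr_det. Qed.

Lemma tr_fam (T : Type) (f : T -> V) (g : forall x : T, 'M[k]_(d (f x)))
  (x x' : T) (E : x = x') (e : f x = f x') : tr e e (g x) = g x'.
Proof. by case: x' / E e => e; rewrite tr_id. Qed.

Lemma tr_sqfam (g : forall y : V, 'M[k]_(d y)) (y y' : V) (e : y = y') :
  tr e e (g y) = g y'.
Proof. exact: (tr_fam (f:=id) g e e). Qed.

Lemma pid_tr (y y' y1 : V) (e : y = y') (X : 'M[k]_(d y, d y1)) :
  (pid_mx (d y) : 'M_(d y', d y)) *m X = tr e erefl X.
Proof. by case: y' / e; rewrite pid_mx_1 mul1mx tr_id. Qed.

Lemma pid_conj (g : forall y : V, 'M[k]_(d y)) (y1 y2 : V) (e : y2 = y1) :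
  g y2 \in unitmx ->
  g y1 *m (pid_mx (d y2) : 'M_(d y1, d y2)) *m invmx (g y2) = pid_mx (d y2).
Proof. by case: y1 / e => hu; rewrite pid_mx_1 mulmx1 mulmxV. Qed.

End Transport.

Lemma tr_arrow (k : fieldType) (Q : quiver) (d : vert Q -> nat) (W : Rep k d)
  (e e' : arr Q) (E : e = e') (y1 y2 : vert Q)
  (p1 : hd e = y1) (p2 : tl e = y2) (q1 : hd e' = y1) (q2 : tl e' = y2) :
  tr p1 p2 (W e) = tr q1 q2 (W e').
Proof. by case: e' / E q1 q2 => q1 q2; rewrite (eq_irrelevance p1 q1) (eq_irrelevance p2 q2). Qed.

Definition decide_bool (c : bool) : {c} + {~~ c} :=
  if c as c return {c} + {~~ c} then left isT else right isT.

Section Contraction.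
Variables (k : fieldType) (Q : quiver) (v0 : vert Q) (b : arr Q).
Hypotheses (hb : tl b = v0) (honly_b : forall a : arr Q, tl a = v0 -> a = b)
  (hw : hd b != v0).

Let Qbar := contract hw.
Let CV := vert Qbar.

Definition wbar : CV := exist _ (hd b) hw.
Definition pr (x : vert Q) : CV := insubd wbar x.

Lemma prK (y : CV) : pr (val y) = y.
Proof. exact: valKd. Qed.

Lemma pr_v0 : pr v0 = wbar.
Proof. by rewrite /pr /insubd insubF //= eqxx. Qed.

Lemma pr_b : pr (tl b) = pr (hd b).
Proof. by rewrite hb pr_v0 (prK wbar). Qed.

Definition ext (s : CV -> int) (x : vert Q) : int := if x == v0 then 0 else s (pr x).

Lemma ext_scale (n : int) (s : CV -> int) :
  (fun x => n * ext s x) = ext (fun y => n * s y).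
Proof. by apply: functional_extensionality => x; rewrite /ext; case: ifP; rewrite ?mulr0. Qed.

Lemma prod_ext (F : vert Q -> k) (s : CV -> int) :
  \prod_(x : vert Q) F x ^ ext s x = \prod_(y : CV) F (val y) ^ s y.
Proof.
rewrite (bigID (fun x => x == v0)) /= big1 ?mul1r; last first.
  by move=> x /eqP ->; rewrite /ext eqxx expr0z.
rewrite (reindex_omap (val : CV -> vert Q) insub); last first.
  by move=> i Pi; rewrite insubT.
apply: eq_big => [y|y _]; first by rewrite (valP y) /= valK eqxx.
by rewrite /ext (negbTE (valP y)) prK.
Qed.

Variable bb : CV -> nat.

Definition beta (x : vert Q) : nat := bb (pr x).

Lemma hd_composite (s : {a : arr Q | (hd a == v0) && (tl a != v0)}) :
  hd (val s) = tl b.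
Proof. by rewrite hb; apply/eqP; case/andP: (valP s). Qed.

Definition Phi (W : Rep k beta) : Rep k bb := fun e =>
  match e as e return 'M[k]_(bb (@hd Qbar e), bb (@tl Qbar e)) with
  | inl s => tr (prK (@hd Qbar (inl s))) (prK (@tl Qbar (inl s))) (W (val s))
  | inr s => tr (prK wbar) (prK (@tl Qbar (inr s)))
               (W b *m tr (congr1 pr (hd_composite s)) (erefl (pr (tl (val s)))) (W (val s)))
  end.

Lemma Phi_poly e : polymx (fun W => Phi W e).
Proof.
case: e => s /=; first exact/polymx_cast/polymx_arrow.
by apply/polymx_cast/polymx_mul; [exact: polymx_arrow | exact/polymx_cast/polymx_arrow].
Qed.

Definition gbar (g : forall x : vert Q, 'M[k]_(beta x)) (y : CV) : 'M[k]_(bb y) :=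
  tr (prK y) (prK y) (g (val y)).

Lemma gbar_GL g : in_GL g -> in_GL (gbar g).
Proof. by move=> hg y; rewrite /gbar tr_unit; apply: hg. Qed.

(* Phi is equivariant: the factor g(v0) cancels in g(w) W(b) g(v0)^-1 g(v0)
   W(a) g(v_i)^-1. *)
Lemma Phi_equiv g W : in_GL g -> Phi (rep_act g W) = rep_act (gbar g) (Phi W).
Proof.
move=> hg; apply: functional_extensionality_dep; case=> s /=; rewrite /rep_act /=.
  by rewrite (tr_mul _ (prK (@tl Qbar (inl s)))) (tr_mul _ (prK (@hd Qbar (inl s)))) tr_inv.
rewrite (tr_mul _ (erefl (pr (tl (val s))))) (tr_mul _ (congr1 pr (hd_composite s))).
rewrite (tr_fam (d:=bb) (f:=pr) g (hd_composite s)) tr_id.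
rewrite !mulmxA -(mulmxA _ (invmx _) (g (tl b))) mulVmx ?mulmx1; last exact: hg.
rewrite -(mulmxA (g (hd b))).
by rewrite (tr_mul _ (prK (@tl Qbar (inr s)))) (tr_mul _ (prK wbar)) tr_inv.
Qed.

Lemma Phi_weight g (s : CV -> int) : weight_char s (gbar g) = weight_char (ext s) g.
Proof. by rewrite /weight_char prod_ext; apply: eq_bigr => y _; rewrite /gbar tr_det. Qed.

Definition wbar_hd (a : arr Q) (h : (hd a == v0) && (tl a != v0)) : wbar = pr (hd a) :=
  esym (etrans (congr1 pr (eqP (andb_left h))) pr_v0).

Definition L (Wb : Rep k bb) : Rep k beta := fun a =>
  match decide_bool ((tl a != v0) && (hd a != v0)) with
  | left h => tr (esym (prK (@hd Qbar (inl (exist _ a h)))))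
                 (esym (prK (@tl Qbar (inl (exist _ a h))))) (Wb (inl (exist _ a h)))
  | right _ =>
    match decide_bool ((hd a == v0) && (tl a != v0)) with
    | left h => tr (wbar_hd h) (esym (prK (@tl Qbar (inr (exist _ a h)))))
                   (Wb (inr (exist _ a h)))
    | right _ => pid_mx (bb (pr (tl a)))
    end
  end.

Lemma L_poly a : polymx (fun Wb => L Wb a).
Proof.
rewrite /L; case: decide_bool => h.
  exact/polymx_cast/(@polymx_arrow k Qbar bb (inl (exist _ a h))).
case: decide_bool => h'; last exact: polymx_const.
exact/polymx_cast/(@polymx_arrow k Qbar bb (inr (exist _ a h'))).
Qed.

Lemma other_is_b a : ~~ ((tl a != v0) && (hd a != v0)) ->
  ~~ ((hd a == v0) && (tl a != v0)) -> a = b.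
Proof.
move=> h1 h2; apply: honly_b; apply/eqP; apply: contraNT h1 => ht.
by rewrite ht /=; apply: contraNN h2 => hh; rewrite hh ht.
Qed.

Lemma L_equiv gb Wb : in_GL gb -> L (rep_act gb Wb) = rep_act (fun x => gb (pr x)) (L Wb).
Proof.
move=> hg; apply: functional_extensionality_dep => a; rewrite /L /rep_act.
case: decide_bool => h.
  by rewrite (tr_mul _ (esym (prK (@tl Qbar (inl (exist _ a h))))))
     (tr_mul _ (esym (prK (@hd Qbar (inl (exist _ a h)))))) tr_inv !tr_sqfam.
case: decide_bool => h'.
  by rewrite (tr_mul _ (esym (prK (@tl Qbar (inr (exist _ a h'))))))
     (tr_mul _ (wbar_hd h')) tr_inv !tr_sqfam.
have Ea := other_is_b h h'.
have E : pr (tl a) = pr (hd a) by rewrite Ea pr_b.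
by rewrite (@pid_conj _ _ _ gb _ _ E) //; apply: hg.
Qed.

Lemma L_weight (gb : forall y : CV, 'M[k]_(bb y)) (s : CV -> int) :
  weight_char (ext s) (fun x => gb (pr x)) = weight_char s gb.
Proof. by rewrite /weight_char prod_ext; apply: eq_bigr => y _; rewrite prK. Qed.

Lemma L_inl Wb (s : {a : arr Q | (tl a != v0) && (hd a != v0)}) :
  L Wb (val s) = tr (esym (prK (@hd Qbar (inl s)))) (esym (prK (@tl Qbar (inl s)))) (Wb (inl s)).
Proof.
rewrite /L; case: decide_bool => h; last by exfalso; move: h; rewrite (valP s).
have E : (inl (exist _ (val s) h) : arr Qbar) = inl s by congr inl; apply: val_inj.
exact: (tr_arrow Wb E).
Qed.

Lemma L_inr Wb (s : {a : arr Q | (hd a == v0) && (tl a != v0)}) :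
  L Wb (val s) = tr (wbar_hd (valP s)) (esym (prK (@tl Qbar (inr s)))) (Wb (inr s)).
Proof.
rewrite /L; case: decide_bool => h.
  by exfalso; move: h; case/andP: (valP s) => /eqP -> _; rewrite eqxx andbF.
case: decide_bool => h'; last by exfalso; move: h'; rewrite (valP s).
have E : (inr (exist _ (val s) h') : arr Qbar) = inr s by congr inr; apply: val_inj.
exact: (tr_arrow Wb E).
Qed.

Lemma L_b Wb : L Wb b = pid_mx (bb (pr (tl b))).
Proof.
rewrite /L; case: decide_bool => h; first by exfalso; move: h; rewrite hb eqxx.
by case: decide_bool => // h'; exfalso; move: h'; rewrite hb eqxx andbF.
Qed.

Lemma Phi_L Wb : Phi (L Wb) = Wb.
Proof.
apply: functional_extensionality_dep; case=> s /=; first by rewrite L_inl tr_tr tr_id.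
by rewrite L_b (pid_tr pr_b) L_inr !tr_tr tr_id.
Qed.

Lemma Sset_lift (Wb : Rep k bb) (s : CV -> int) : Sset (L Wb) (ext s) <-> Sset Wb s.
Proof.
split.
  apply: (Sset_pullback L_poly (gamma := fun gb x => gb (pr x))) => //.
  - by move=> gb hg x; apply: hg.
  - by move=> gb W hg; apply: L_equiv.
  - by move=> gb; rewrite L_weight.
rewrite -{1}(Phi_L Wb); apply: (Sset_pullback Phi_poly (gamma := gbar)).
- exact: gbar_GL.
- by move=> g W hg; apply: Phi_equiv.
- by move=> g; rewrite Phi_weight.
Qed.

End Contraction.

Theorem proposition4p8 (k : closedFieldType) (hchar : [pchar k] =i pred0)
  (Q : quiver) (hacyc : acyclic Q) (v0 : vert Q) (b : arr Q)
  (hb : tl b = v0) (honly_b : forall a : arr Q, tl a = v0 -> a = b)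
  (hw : hd b != v0) :
  propS k Q -> propS k (contract hw).
Proof.
move=> HS bb Wb n s n_gt0 Hns.
apply/(Sset_lift hb honly_b); apply: (HS _ _ n _ n_gt0).
by rewrite ext_scale; apply/(Sset_lift hb honly_b).
Qed.
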